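(* Let $W$ be a balanced tetrahedral erasure channel with $Q(W)\le 2$. Then $Q(W^{s})\le 2$ and $Q(W^{p})\le 2$.
   Context: $\mathrm{TEC}(p,q,r,s,t)$ denotes a tetrahedral erasure channel with parameters $p,q,r,s,t\ge0$ summing to $1$. Its entropy is $H=\frac{q+r+s}{2}+t$, its edge mass is $E=q+r+s$, and its Quetelet index is $Q=E/(H(1-H))$ (defined when $0<H<1$). It is balanced if $q=r=s$. For $W=\mathrm{TEC}(p,q,r,s,t)$, the serial child is $W^{s}=\mathrm{TEC}(p^2,\ ps+sq+qp,\ pq+qr+rp,\ pr+rs+sp,\ 1-\text{(sum of the other four)})$ and the parallel child is $W^{p}=\mathrm{TEC}(1-\text{(sum of the other four)},\ ts+sq+qt,\ tq+qr+rt,\ tr+rs+st,\ t^2)$. *)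

From Stdlib Require Import Reals Lra.
Open Scope R_scope.

Record TEC := mkTEC { tp : R; tq : R; tr : R; ts : R; tt : R }.

Definition valid_TEC (W : TEC) : Prop :=
  0 <= tp W /\ 0 <= tq W /\ 0 <= tr W /\ 0 <= ts W /\ 0 <= tt W /\
  tp W + tq W + tr W + ts W + tt W = 1.

Definition entropy (W : TEC) : R := (tq W + tr W + ts W) / 2 + tt W.
Definition edge_mass (W : TEC) : R := tq W + tr W + ts W.
(* Quetelet index; only meaningful when 0 < entropy W < 1. *)
Definition quetelet (W : TEC) : R :=
  edge_mass W / (entropy W * (1 - entropy W)).

Definition balanced (W : TEC) : Prop := tq W = tr W /\ tr W = ts W.

Definition serial_child (W : TEC) : TEC :=
  let p := tp W in let q := tq W in let r := tr W in let s := ts W in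
  let p' := p ^ 2 in
  let q' := p * s + s * q + q * p in
  let r' := p * q + q * r + r * p in
  let s' := p * r + r * s + s * p in
  mkTEC p' q' r' s' (1 - (p' + q' + r' + s')).

Definition parallel_child (W : TEC) : TEC :=
  let q := tq W in let r := tr W in let s := ts W in let t := tt W in
  let q' := t * s + s * q + q * t in
  let r' := t * q + q * r + r * t in
  let s' := t * r + r * s + s * t in
  let t' := t ^ 2 in
  mkTEC (1 - (q' + r' + s' + t')) q' r' s' t'.

Definition Q_le2 (W : TEC) : Prop :=
  0 < entropy W < 1 /\ quetelet W <= 2.

(* For a balanced channel write e for its edge mass and s = 1 - H for its
   co-entropy.  The serial child has co-entropy s^2 - e^2/12 and edge mass
   2es - 2e^2/3, and Q <= 2 says e <= 2s(1 - s), i.e. s^2 <= s - e/2.  The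
   child's margin 2X(1 - X) - E' then factors as 2(s - e/2 - X)(s - e/2 + X)
   with X = s^2 - e^2/12 <= s - e/2.  The parallel child is the mirror image
   of the serial one under the swap p <-> t, which exchanges H and 1 - H and
   so preserves Q. *)

From Stdlib Require Import Reals Lra.
Open Scope R_scope.

Lemma Q_le2_iff (W : TEC) :
  Q_le2 W <->
  0 < entropy W < 1 /\ edge_mass W <= 2 * (entropy W * (1 - entropy W)).
Proof.
  unfold Q_le2, quetelet.
  set (D := entropy W * (1 - entropy W)).
  split; intros [[H0 H1] HQ]; (split; [lra|]);
    assert (HD : 0 < D) by (unfold D; nra);
    assert (HE : edge_mass W = edge_mass W / D * D) by (field; lra);
    nra.
Qed.

Lemma quetelet_le2_step (s e : R) :
  0 <= e -> e / 2 <= s -> 0 < s < 1 -> e <= 2 * (s * (1 - s)) ->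
  0 < s ^ 2 - e ^ 2 / 12 < 1 /\
  2 * e * s - 2 * e ^ 2 / 3
    <= 2 * ((s ^ 2 - e ^ 2 / 12) * (1 - (s ^ 2 - e ^ 2 / 12))).
Proof.
  intros He Hes [Hs0 Hs1] HQ.
  set (X := s ^ 2 - e ^ 2 / 12).
  assert (HX_le : X <= s - e / 2) by (unfold X; nra).
  assert (HX_pos : 0 < X) by (unfold X; nra).
  assert (Hmargin : 2 * (X * (1 - X)) - (2 * e * s - 2 * e ^ 2 / 3)
                    = 2 * ((s - e / 2 - X) * (s - e / 2 + X))) by (unfold X; field).
  split; [lra|].
  assert (0 <= (s - e / 2 - X) * (s - e / 2 + X)) by nra.
  lra.
Qed.

Lemma serial_child_coentropy (W : TEC) :
  valid_TEC W -> balanced W ->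
  1 - entropy (serial_child W) = (1 - entropy W) ^ 2 - edge_mass W ^ 2 / 12.
Proof.
  destruct W as [p q r s t].
  unfold valid_TEC, balanced, entropy, edge_mass, serial_child; cbn.
  intros (_ & _ & _ & _ & _ & Hsum) [-> ->].
  replace t with (1 - p - 3 * s) by lra.
  field.
Qed.

Lemma serial_child_edge_mass (W : TEC) :
  valid_TEC W -> balanced W ->
  edge_mass (serial_child W)
    = 2 * edge_mass W * (1 - entropy W) - 2 * edge_mass W ^ 2 / 3.
Proof.
  destruct W as [p q r s t].
  unfold valid_TEC, balanced, entropy, edge_mass, serial_child; cbn.
  intros (_ & _ & _ & _ & _ & Hsum) [-> ->].
  replace t with (1 - p - 3 * s) by lra.
  field.
Qed.

Lemma Q_le2_serial_child (W : TEC) :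
  valid_TEC W -> balanced W -> Q_le2 W -> Q_le2 (serial_child W).
Proof.
  intros HW Hbal. rewrite !Q_le2_iff. intros [HH HQ].
  assert (Hcoent := serial_child_coentropy W HW Hbal).
  assert (Hedge := serial_child_edge_mass W HW Hbal).
  assert (Hedge_nonneg : 0 <= edge_mass W).
  { destruct HW as (_ & ? & ? & ? & _). unfold edge_mass. lra. }
  assert (Hedge_coent : edge_mass W / 2 <= 1 - entropy W).
  { destruct HW as (? & _ & _ & _ & ? & ?). unfold entropy, edge_mass. lra. }
  destruct (quetelet_le2_step (1 - entropy W) (edge_mass W))
    as [HX HQX]; [assumption | assumption | lra | lra |].
  rewrite <- Hcoent in HX, HQX. rewrite Hedge.
  split; lra.
Qed.

Lemma valid_serial_child (W : TEC) : valid_TEC W -> valid_TEC (serial_child W).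
Proof.
  destruct W as [p q r s t].
  unfold valid_TEC, serial_child; cbn.
  intros (Hp & Hq & Hr & Hs & Ht & Hsum).
  (* the last coordinate is nonnegative as (q + r + s)^2 >= qr + rs + sq *)
  assert (Hrest : 1 - (p ^ 2 + (p * s + s * q + q * p) + (p * q + q * r + r * p)
                       + (p * r + r * s + s * p))
                  = (q + r + s + t) ^ 2 + 2 * p * t - (q * r + r * s + s * q)).
  { replace 1 with ((p + q + r + s + t) ^ 2) by (rewrite Hsum; ring). ring. }
  repeat split; try nra; ring.
Qed.

Definition swap_ends (W : TEC) : TEC :=
  mkTEC (tt W) (tq W) (tr W) (ts W) (tp W).

Lemma valid_swap_ends (W : TEC) : valid_TEC W -> valid_TEC (swap_ends W).
Proof. unfold valid_TEC; cbn. lra. Qed.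

Lemma entropy_swap_ends (W : TEC) :
  valid_TEC W -> entropy (swap_ends W) = 1 - entropy W.
Proof. unfold valid_TEC, entropy; cbn. lra. Qed.

Lemma Q_le2_swap_ends (W : TEC) :
  valid_TEC W -> Q_le2 W -> Q_le2 (swap_ends W).
Proof.
  intros HW. rewrite !Q_le2_iff, (entropy_swap_ends W HW).
  change (edge_mass (swap_ends W)) with (edge_mass W).
  intros [HH HQ]. split; lra.
Qed.

Lemma parallel_child_swap_ends (W : TEC) :
  parallel_child W = swap_ends (serial_child (swap_ends W)).
Proof.
  destruct W as [p q r s t].
  unfold parallel_child, serial_child, swap_ends; cbn.
  f_equal; ring.
Qed.

Theorem mainTheorem9 (W : TEC) :
  valid_TEC W -> balanced W -> Q_le2 W ->
  Q_le2 (serial_child W) /\ Q_le2 (parallel_child W).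
Proof.
  intros HW Hbal HQ.
  split; [exact (Q_le2_serial_child W HW Hbal HQ)|].
  rewrite parallel_child_swap_ends.
  apply Q_le2_swap_ends.
  - apply valid_serial_child, valid_swap_ends, HW.
  - apply Q_le2_serial_child; [apply valid_swap_ends, HW | exact Hbal |].
    apply Q_le2_swap_ends, HQ; exact HW.
Qed.
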